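(* Let $f$ be a tolerance function with $0<f(K)<K$ satisfying $$\lim_{K\to\infty}\frac{K-f(K)}{\ln K}=0.$$ Then $p=\lim_{n\to\infty}P(\mathbf y\in L(\mathbf x))>0$ implies $P(\mathbf y\in I(\mathbf x,f))=1$. Furthermore, if $p>0.5$, it suffices that $f$ satisfies $$\lim_{K\to\infty}\frac{K}{(K-f(K))\,2^{K-f(K)}}=+\infty$$ to obtain $P(\mathbf y\in I(\mathbf x,f))=1$.
   Context: Setting: $n$ instances form the dataset $\mathcal D=\mathcal D_n$; a forest $\Theta_K$ of $K$ axis-aligned causal trees is built on $\mathcal D$, the trees independent given $\mathcal D$. $L_k(\mathbf x)$ is the leaf of tree $k$ containing $\mathbf x$, $I(\mathbf x,\theta_k)$ its box; $P(\mathbf y\in L(\mathbf x))=P(\mathbf y\in L_k(\mathbf x)\mid\mathcal D)$, same for every $k$, with the events independent across $k$. LILI with $K$ trees under tolerance function $f$: $I(\mathbf x,\Theta_K,f)=\bigcup_{s>K-f(K)}\bigcup_{1\le i_1<\cdots<i_s\le K}\bigcap_{k=1}^sI(\mathbf x,\theta_{i_k})$, i.e. $\mathbf y\in I(\mathbf x,\Theta_K,f)$ iff the number of $k$ with $\mathbf y\in L_k(\mathbf x)$ exceeds $K-f(K)$; $P(\mathbf y\in I(\mathbf x,f)):=\lim_{K\to\infty}\lim_{n\to\infty}P(\mathbf y\in I(\mathbf x,\Theta_K,f)\mid\mathcal D_n)$. *)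

From HB Require Import structures.
From mathcomp Require Import all_boot all_order all_algebra.
From mathcomp Require Import all_classical all_reals all_analysis.
Set Implicit Arguments. Unset Strict Implicit. Unset Printing Implicit Defensive.
Import Order.TTheory GRing.Theory Num.Theory numFieldNormedType.Exports.
Local Open Scope classical_set_scope.
Local Open Scope ring_scope.

Definition mutually_independent d (T : measurableType d) (R : realType)
  (P : probability T R) (A : nat -> set T) : Prop :=
  (forall k, measurable (A k)) /\
  (forall s : seq nat, uniq s ->
     P (\big[setI/setT]_(k <- s) A k) = (\prod_(k <- s) P (A k))%E).

(* number of trees k < K whose leaf L_k(x) contains y, at outcome w
   (A k = event "y in L_k(x)") *)
Definition nb_agree T (A : nat -> set T) (K : nat) (w : T) : nat :=
  \sum_(k < K) ((w \in A k) : nat).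

(* the event "y in I(x, Theta_K, f)" : the number of k <= K with
   y in L_k(x) exceeds K - f(K) *)
Definition LILI_event T (A : nat -> set T) (f : nat -> nat) (K : nat) : set T :=
  [set w | (K - f K < nb_agree A K w)%N].

(* Given D_n, the number of trees whose leaf contains y is binomial with
   parameters K and p_n, so P(y in I(x, Theta_K, f) | D_n) = 1 - F_K(K - f K)
   where F_K is the binomial distribution function evaluated at p_n; as F_K is
   a polynomial in p_n, letting n -> oo just replaces p_n by p.  Counting each
   success with weight 2 gives the Chernoff-type bound
   F_K(m) <= 2^m (1 - p/2)^K, which tends to 0 with K as soon as
   2^(K - f K) <= K eventually.  Both growth conditions on f imply this, the
   second one for every p > 0. *)

From HB Require Import structures.
From mathcomp Require Import all_boot all_order all_algebra.
From mathcomp Require Import all_classical all_reals all_analysis.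
From mathcomp Require Import ring lra.
Set Implicit Arguments. Unset Strict Implicit. Unset Printing Implicit Defensive.
Import Order.TTheory GRing.Theory Num.Theory numFieldNormedType.Exports.
Local Open Scope classical_set_scope.
Local Open Scope ring_scope.

Definition binomial_cdf (R : pzRingType) (K m : nat) (x : R) : R :=
  \sum_(g : {ffun 'I_K -> bool} | (\sum_(k < K) g k <= m)%N)
     \prod_(k < K) (if g k then x else 1 - x).

Lemma binomial_cdf_ge0 (R : numDomainType) K m (x : R) :
  0 <= x <= 1 -> 0 <= binomial_cdf K m x.
Proof.
move=> /andP[x0 x1]; apply: sumr_ge0 => g _; apply: prodr_ge0 => k _.
by case: (g k); rewrite ?subr_ge0.
Qed.

Lemma binomial_cdf_le (R : realFieldType) K m (x : R) : 0 <= x <= 1 ->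
  binomial_cdf K m x <= 2 ^+ m * (1 - x / 2) ^+ K.
Proof.
move=> /andP[x0 x1].
pose q (g : {ffun 'I_K -> bool}) := \prod_(k < K) (if g k then x / 2 else 1 - x).
have q_ge0 g : 0 <= q g.
  by apply: prodr_ge0 => k _; case: (g k); rewrite ?divr_ge0 ?subr_ge0.
have weight (g : {ffun 'I_K -> bool}) :
    \prod_(k < K) (if g k then x else 1 - x) =
    2 ^+ (\sum_(k < K) g k) * q g.
  rewrite -prodrXr -big_split /=; apply: eq_bigr => k _.
  by case: (g k); rewrite ?expr1 ?expr0 ?mul1r //; field.
have total : \sum_(g : {ffun 'I_K -> bool}) q g = (1 - x / 2) ^+ K.
  rewrite /q -(bigA_distr_bigA (fun (k : 'I_K) (b : bool) =>
    if b then x / 2 else 1 - x)) /=.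
  under eq_bigr do rewrite big_bool /=.
  by rewrite prodr_const card_ord; congr (_ ^+ _); field.
rewrite -total mulr_sumr /binomial_cdf (eq_bigr _ (fun g _ => weight g)).
rewrite [leRHS](bigID (fun g : {ffun 'I_K -> bool} =>
  (\sum_(k < K) g k <= m)%N)) /=.
rewrite -[leLHS]addr0 lerD //; first apply: ler_sum => g gm.
  by rewrite ler_wpM2r // ler_weXn2l // ler1n.
by apply: sumr_ge0 => g _; rewrite mulr_ge0 // exprn_ge0.
Qed.

Lemma cvg_binomial_cdf (R : realType) K m (u : nat -> R) (a : R) :
  u n @[n --> \oo] --> a ->
  binomial_cdf K m (u n) @[n --> \oo] --> binomial_cdf K m a.
Proof.
move=> ua; apply: (cvg_big (op := +%R)) => //; first exact: add_continuous.
move=> g _; apply: (@cvg_big R _ *%R 1 xpredT mul_continuous) => // k _.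
by case: (g k) => //; apply: cvgB => //; apply: cvg_cst.
Qed.

Lemma natr_mul_exprn_le (R : realFieldType) (s : R) n :
  0 <= s < 1 -> n%:R * s ^+ n <= (1 - s)^-1.
Proof.
move=> /andP[s0 s1]; have s1_gt0 : 0 < 1 - s by rewrite subr_gt0.
have geom : (1 - s) * \sum_(i < n) s ^+ i = 1 - s ^+ n.
  by rewrite -[1 - s]opprB -[1 - s ^+ n]opprB subrX1 mulNr.
apply: (@le_trans _ _ (\sum_(i < n) s ^+ i)).
  rewrite mulr_natl -[n in _ *+ n]card_ord -sumr_const; apply: ler_sum => i _.
  by apply: ler_wiXn2l => //; [exact: ltW | exact: ltnW].
rewrite -(ler_pM2l s1_gt0) geom mulfV ?gt_eqF //.
by rewrite lerBlDr lerDl exprn_ge0.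
Qed.

Lemma binomial_cdf_cvg0 (R : realType) (x : R) (m : nat -> nat) :
  0 < x <= 1 -> (\forall K \near \oo, (2 ^ m K <= K)%N) ->
  binomial_cdf K (m K) x @[K --> \oo] --> 0.
Proof.
move=> /andP[x0 x1] m_small.
(* 1 - x/2 <= s^2, hence 2^m (1 - x/2)^K <= K s^(2K) <= s^K / (1 - s). *)
pose s := 1 - x / 4.
have s0 : 0 <= s by rewrite /s; lra.
have s1 : s < 1 by rewrite /s; lra.
apply: (@squeeze_cvgr _ _ _ _ (cst 0) (fun K => (1 - s)^-1 * s ^+ K));
  last 2 first.
- exact: cvg_cst.
- rewrite -(mulr0 (1 - s)^-1); apply: cvgM; first exact: cvg_cst.
  by apply: cvg_expr; rewrite ger0_norm.
near=> K; rewrite binomial_cdf_ge0 ?(ltW x0) //=.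
apply: (le_trans (binomial_cdf_le _ _ _)); first by rewrite (ltW x0).
have pow2_le : 2 ^+ m K <= K%:R :> R by rewrite -natrX ler_nat; near: K.
have half_le : 1 - x / 2 <= s ^+ 2 by rewrite /s; nra.
apply: (@le_trans _ _ (K%:R * (s ^+ 2) ^+ K)).
  by rewrite ler_pM ?exprn_ge0 ?lerXn2r ?nnegrE ?exprn_ge0 //; lra.
rewrite -exprM mulnC exprM expr2 mulrA ler_wpM2r ?exprn_ge0 //.
by rewrite natr_mul_exprn_le // s0.
Unshelve. all: end_near.
Qed.

Section independent_events.
Context d (T : measurableType d) (R : realType) (P : probability T R).
Context (A : nat -> set T) (x : R).
Hypothesis indepA : mutually_independent P A.
Hypothesis PA : forall k, P (A k) = x%:E.

Definition signed_event K (g : 'I_K -> bool) (k : 'I_K) : set T :=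
  if g k then A k else ~` A k.

Lemma measurable_signed_event K g k : measurable (@signed_event K g k).
Proof.
by rewrite /signed_event; case: (g k); [|apply: measurableC]; apply: indepA.1.
Qed.

Lemma prob_bigsetI_signed_event K (g : 'I_K -> bool) (s r : seq 'I_K) :
  uniq (s ++ r) ->
  P (\big[setI/setT]_(k <- s) A k `&`
     \big[setI/setT]_(k <- r) signed_event g k) =
  (x ^+ size s * \prod_(k <- r) (if g k then x else 1 - x))%:E.
Proof.
elim: r s => [|j r IH] s.
  rewrite cats0 big_nil setIT big_nil mulr1 => us.
  have := indepA.2 (map val s); rewrite map_inj_uniq; last exact: val_inj.
  move=> /(_ us); rewrite !big_map => ->; under eq_bigr do rewrite PA.
  by rewrite prodEFin big_const_seq count_predT iter_mulr mulr1.
move=> us; have ujs : uniq ((j :: s) ++ r).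
  by rewrite -cat1s -catA uniq_catCA.
have cons_s : A j `&` \big[setI/setT]_(k <- s) A k =
    \big[setI/setT]_(k <- j :: s) A k by rewrite big_cons.
rewrite !big_cons {1}/signed_event; case: (g j).
  by rewrite setIA (setIC _ (A j)) cons_s IH //= exprS; congr (_%:E); ring.
set X := \big[setI/setT]_(k <- s) A k `&`
          \big[setI/setT]_(k <- r) signed_event g k.
have -> : \big[setI/setT]_(k <- s) A k `&` (~` A j `&`
    \big[setI/setT]_(k <- r) signed_event g k) = X `\` A j.
  by rewrite setDE setIA setIAC.
have mAj : measurable (A j) := indepA.1 j.
have mX : measurable X.
  apply: measurableI; apply: bigsetI_measurable => k _;
    [exact: indepA.1 | exact: measurable_signed_event].
have -> : P (X `\` A j) = (P X - P (X `&` A j))%E.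
  by rewrite measureD // (le_lt_trans (probability_le1 _ _)) ?ltry.
rewrite /X IH; last by move: ujs => /andP[].
rewrite setIAC (setIC _ (A j)) cons_s IH //= -EFinB exprS; congr (_%:E); ring.
Qed.

Definition outcome K (w : T) : {ffun 'I_K -> bool} :=
  [ffun k : 'I_K => w \in A k].

Lemma outcome_preimage K (g : {ffun 'I_K -> bool}) :
  outcome K @^-1` [set g] = \big[setI/setT]_(k < K) signed_event g k.
Proof.
rewrite -bigcap_seq; apply/seteqP; split => w /=.
  move=> <- k _; rewrite /signed_event ffunE; case: ifPn => [/set_mem //|].
  by move=> /negP + /mem_set.
move=> Hw; apply/ffunP => k; rewrite ffunE.
move: (Hw k (mem_index_enum k)); rewrite /signed_event.
by case: (g k) => [/mem_set //|nAw]; apply/negbTE/negP => /set_mem.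
Qed.

Lemma measurable_outcome_preimage K (g : {ffun 'I_K -> bool}) :
  measurable (outcome K @^-1` [set g]).
Proof.
by rewrite outcome_preimage; apply: bigsetI_measurable => k _;
  apply: measurable_signed_event.
Qed.

Lemma prob_outcome K (g : {ffun 'I_K -> bool}) :
  P (outcome K @^-1` [set g]) = (\prod_(k < K) (if g k then x else 1 - x))%:E.
Proof.
have := @prob_bigsetI_signed_event K g [::] (index_enum 'I_K).
rewrite big_nil setTI expr0 mul1r outcome_preimage => -> //.
exact: index_enum_uniq.
Qed.

Lemma nb_agree_le_bigsetU K m :
  [set w | (nb_agree A K w <= m)%N] =
  \big[setU/set0]_(g : {ffun 'I_K -> bool} | (\sum_(k < K) g k <= m)%N)
     outcome K @^-1` [set g].
Proof.
rewrite -bigcup_seq_cond; apply/seteqP; split => w /=.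
  move=> wm; exists (outcome K w) => //.
  apply/andP; split; first exact: mem_index_enum.
  by under eq_bigr do rewrite ffunE.
move=> [g /andP[_ +] wg]; have <- : outcome K w = g := wg.
by rewrite /nb_agree; under eq_bigr do rewrite ffunE.
Qed.

Lemma prob_nb_agree_le K m :
  P [set w | (nb_agree A K w <= m)%N] = (binomial_cdf K m x)%:E.
Proof.
rewrite nb_agree_le_bigsetU /binomial_cdf -sumEFin.
under [in RHS]eq_bigr do rewrite -prob_outcome.
rewrite (big_enum_val_cond (A := predT)) [RHS](big_enum_val_cond (A := predT)) /=.
apply: measure_bigsetU_ord_cond => [i _|i j _ _ [w [wi wj]]].
  exact: measurable_outcome_preimage.
by apply: enum_val_inj; rewrite -[LHS]wi -[RHS]wj.
Qed.

Lemma prob_LILI_event f K :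
  fine (P (LILI_event A f K)) = 1 - binomial_cdf K (K - f K) x.
Proof.
have -> : LILI_event A f K = ~` [set w | (nb_agree A K w <= K - f K)%N].
  by apply/seteqP; split => w; rewrite /LILI_event /= ltnNge => /negP.
rewrite probability_setC ?prob_nb_agree_le // nb_agree_le_bigsetU.
by apply: bigsetU_measurable => g _; apply: measurable_outcome_preimage.
Qed.

End independent_events.

Lemma expn2_le_eventually_ln (R : realType) (m : nat -> nat) :
  (fun K : nat => ((m K)%:R / ln K%:R : R)) @ \oo --> (0 : R) ->
  \forall K \near \oo, (2 ^ m K <= K)%N.
Proof.
move=> ratio0; have ln2_gt0 : 0 < ln (2 : R) by rewrite ln_gt0 // ltr1n.
have inv_ln2_gt0 : 0 < (ln (2 : R))^-1 by rewrite invr_gt0.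
have ratio_lt := cvgr_lt 0 ratio0 _ inv_ln2_gt0.
near=> K; have K_gt1 : (1 < K)%N by near: K; exists 2%N.
have lnK_gt0 : 0 < ln (K%:R : R) by rewrite ln_gt0 // ltr1n.
have : (m K)%:R / ln K%:R < (ln (2 : R))^-1 :> R by near: K; exact: ratio_lt.
rewrite ltr_pdivrMr // mulrC ltr_pdivlMr // mulr_natl => lt_lnK.
have : ln ((2 : R) ^+ m K) < ln (K%:R : R) by rewrite lnXn.
rewrite ltr_ln ?posrE ?exprn_gt0 ?ltr0n ?(ltn_trans _ K_gt1) //.
by rewrite -natrX ltr_nat => /ltnW.
Unshelve. all: end_near.
Qed.

Lemma expn2_le_eventually_cvgy (R : realType) (m : nat -> nat) :
  (fun K : nat => (K%:R / ((m K)%:R * 2 ^+ m K) : R)) @ \oo --> +oo ->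
  \forall K \near \oo, (2 ^ m K <= K)%N.
Proof.
move/cvgryPge => /(_ 1) ratio_ge1; near=> K.
have : 1 <= K%:R / ((m K)%:R * 2 ^+ m K) :> R by near: K.
(* m K = 0 is excluded because then the ratio is K / 0 = 0. *)
have [->|mK_gt0] := posnP (m K); first by rewrite mul0r invr0 mulr0 ler10.
rewrite ler_pdivlMr ?mulr_gt0 ?exprn_gt0 ?ltr0n // mul1r -natrX -natrM ler_nat.
exact/leq_trans/leq_pmull.
Unshelve. all: end_near.
Qed.

Lemma LILI_event_cvg1 (R : realType) d (T : measurableType d)
    (P : nat -> probability T R) (A : nat -> nat -> set T)
    (pn : nat -> R) (p : R) (f : nat -> nat) :
  (forall n, mutually_independent (P n) (A n)) ->
  (forall n k, P n (A n k) = (pn n)%:E) ->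
  pn n @[n --> \oo] --> p -> 0 < p ->
  (\forall K \near \oo, (2 ^ (K - f K) <= K)%N) ->
  (forall K, cvgn (fun n => fine (P n (LILI_event (A n) f K)))) /\
  (fun K => limn (fun n => fine (P n (LILI_event (A n) f K)))) @ \oo --> (1 : R).
Proof.
move=> indepA PA pn_p p_gt0 f_large.
have pn01 n : 0 <= pn n <= 1.
  rewrite -!lee_fin -(PA n 0%N) measure_ge0 probability_le1 //.
  exact: (indepA n).1.
have p_le1 : p <= 1.
  apply: (@ler_cvg_to _ _ _ _ pn (cst 1) p 1 pn_p (cvg_cst _)).
  by near=> n; case/andP: (pn01 n).
have cvg_LILI K : fine (P n (LILI_event (A n) f K)) @[n --> \oo] -->
    1 - binomial_cdf K (K - f K) p.
  under eq_fun do rewrite (prob_LILI_event (indepA _) (PA _)).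
  by apply: cvgB; [exact: cvg_cst | exact: cvg_binomial_cdf].
split => [K|]; first by apply/cvg_ex; exists (1 - binomial_cdf K (K - f K) p).
have -> : (fun K => limn (fun n => fine (P n (LILI_event (A n) f K)))) =
    (fun K => 1 - binomial_cdf K (K - f K) p).
  by apply/funext => K; apply: cvg_lim (cvg_LILI K).
rewrite -[X in _ --> X]subr0; apply: cvgB; first exact: cvg_cst.
by apply: (binomial_cdf_cvg0 _ f_large); rewrite p_gt0.
Unshelve. all: end_near.
Qed.

Theorem mainTheorem14 (R : realType) (d : measure_display) (T : measurableType d)
  (P : nat -> probability T R)          (* P n = P( . | D_n) *)
  (A : nat -> nat -> set T)             (* A n k = event "y in L_k(x)" given D_n *)
  (pn : nat -> R) (p : R) (f : nat -> nat) :
  (forall n, mutually_independent (P n) (A n)) ->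
  (forall n k, P n (A n k) = (pn n)%:E) ->
  pn n @[n --> \oo] --> p ->
  (forall K, (1 < K)%N -> (0 < f K < K)%N) ->
  ((0 < p ->
    (fun K : nat => ((K - f K)%:R / ln K%:R : R)) @ \oo --> (0 : R) ->
    (forall K, cvgn (fun n => fine (P n (LILI_event (A n) f K)))) /\
    (fun K => limn (fun n => fine (P n (LILI_event (A n) f K)))) @ \oo --> (1 : R))
  /\
  (1 / 2 < p ->
    (fun K : nat => (K%:R / ((K - f K)%:R * 2 ^+ (K - f K)) : R)) @ \oo --> +oo ->
    (forall K, cvgn (fun n => fine (P n (LILI_event (A n) f K)))) /\
    (fun K => limn (fun n => fine (P n (LILI_event (A n) f K)))) @ \oo --> (1 : R))).
Proof.
move=> indepA PA pn_p _; split=> [p_gt0 ratio0 | p_gt_half ratio_oo].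
  apply: (LILI_event_cvg1 indepA PA pn_p p_gt0).
  exact: (@expn2_le_eventually_ln R (fun K => (K - f K)%N)).
apply: (LILI_event_cvg1 indepA PA pn_p); first by apply: lt_trans p_gt_half.
exact: (@expn2_le_eventually_cvgy R (fun K => (K - f K)%N)).
Qed.
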